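(* Let $\mathbf p=(p_1,\dots,p_n)$ be positive integers, $c\in[0,1]$, and $P=(p_1+\cdots+p_n)/\gcd(p_1,\dots,p_n)$. Write $S_c(\mathbf p)=(s_1,s_2,\dots)$. Then $s_{mP+k}=s_k$ for all integers $m\ge1$ and $k\ge1$. Moreover, $P$ is the minimal period of $S_c(\mathbf p)$.
   Context: Stationary divisor method with cut point $c\in[0,1]$: seats are allocated one at a time. Initially each party $i$ has $a_i=0$ seats; each next seat goes to a party $i$ maximizing $p_i/(a_i+c)$, whose $a_i$ then increases by $1$. Ties are broken in favor of the smallest index; parties are indexed so that $p_1\ge\cdots\ge p_n$. For $c=0$ the convention is that $p_i/0>p_j/0$ whenever $p_i>p_j$, and $p_i/0>p_j/k$ for every $k>0$. $S_c(\mathbf p)=(s_1,s_2,\dots)$ is the infinite sequence in which $s_j$ is the index of the party receiving the $j$-th seat. *)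

From mathcomp Require Import all_boot all_order all_algebra.
From mathcomp Require Import reals.
Set Implicit Arguments. Unset Strict Implicit. Unset Printing Implicit Defensive.
Import Order.TTheory GRing.Theory Num.Theory.
Local Open Scope ring_scope.

(* Parties are 'I_n.+1 (party i+1 of the paper is the ordinal i); n.+1 >= 1 parties.
   p : populations, a : current seat counts. *)
Section Stationary.
Variables (R : realType) (n : nat) (c : R) (p : 'I_n.+1 -> nat).

Definition zero_denom (a : 'I_n.+1 -> nat) (i : 'I_n.+1) : bool :=
  (c == 0) && (a i == 0%N).

(* quot_ge a i j : p_i/(a_i+c) >= p_j/(a_j+c), with the c = 0 conventions:
   p_i/0 > p_j/0 iff p_i > p_j, and p_i/0 > p_j/k for every k > 0. *)
Definition quot_ge (a : 'I_n.+1 -> nat) (i j : 'I_n.+1) : bool :=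
  match zero_denom a i, zero_denom a j with
  | true, true => (p j <= p i)%N
  | true, false => true
  | false, true => false
  | false, false =>
      (p j)%:R / ((a j)%:R + c) <= (p i)%:R / ((a i)%:R + c)
  end.

Definition winner (a : 'I_n.+1 -> nat) : 'I_n.+1 :=
  odflt ord0 [pick i | [forall j : 'I_n.+1, quot_ge a i j] &&
                       [forall j : 'I_n.+1, ((j < i)%N) ==> ~~ quot_ge a j i]].

Fixpoint alloc (k : nat) : 'I_n.+1 -> nat :=
  match k with
  | 0 => fun _ => 0%N
  | k'.+1 => let a := alloc k' in
             let w := winner a in
             fun i => if i == w then (a i).+1 else a i
  end.

(* S_c(p) = (s_1, s_2, ...): seat j (j >= 1) goes to party stat_seq j.
   (The value at j = 0 is meaningless.) *)
Definition stat_seq (j : nat) : 'I_n.+1 := winner (alloc j.-1).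

End Stationary.

Definition total_over_gcd (n : nat) (p : 'I_n.+1 -> nat) : nat :=
  ((\sum_(i < n.+1) p i) %/ (\big[gcdn/0%N]_(i < n.+1) p i))%N.

From mathcomp Require Import all_boot all_order all_algebra.
From mathcomp Require Import reals.
From mathcomp Require Import ring lra.
Set Implicit Arguments. Unset Strict Implicit. Unset Printing Implicit Defensive.
Import Order.TTheory GRing.Theory Num.Theory.
Local Open Scope ring_scope.

(* Write [q_i = p_i / gcd p], so that [P = sum q].  Two facts drive the proof.
   (1) Adding to the seat vector any vector [b] proportional to [p] does not
   change the winner: it adds the same amount [p_i b_j = p_j b_i] to both sides
   of every cross-multiplied comparison (and removes zero denominators, which is
   harmless because [p] is sorted and ties go to the smaller index).
   (2) Since [c <= 1], a party that has reached its quota [b_i] never beats a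
   party below its quota; hence after [sum b] seats the allocation is exactly [b].
   Taking [b = m q] gives periodicity with period [P].  Conversely a period [r]
   makes the allocation additive, so after [P r] seats it is [P] times the
   allocation after [r] seats; by (2) it is also [r q].  Thus [P] divides every
   [r q_i], hence divides [r]. *)

Section Reduced.
Variables (n : nat) (p : 'I_n.+1 -> nat).
Hypothesis hpos : forall i, (0 < p i)%N.
Local Open Scope nat_scope.

Definition pgcd : nat := \big[gcdn/0]_(i < n.+1) p i.
Definition reduced (i : 'I_n.+1) : nat := p i %/ pgcd.

Lemma pgcd_dvd i : pgcd %| p i.
Proof. by apply/dvdn_biggcdP: i isT. Qed.

Lemma pgcd_gt0 : 0 < pgcd.
Proof.
rewrite lt0n; apply: contraTneq (hpos ord0) => g0.
by move: (pgcd_dvd ord0); rewrite g0 dvd0n => /eqP ->.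
Qed.

Lemma reducedK i : reduced i * pgcd = p i.
Proof. by rewrite divnK // pgcd_dvd. Qed.

Lemma reduced_gt0 i : 0 < reduced i.
Proof. by have := hpos i; rewrite -reducedK muln_gt0 => /andP []. Qed.

Lemma scaled_reduced_prop m i j : p i * (m * reduced j) = p j * (m * reduced i).
Proof.
by rewrite -(reducedK i) -(reducedK j); ring.
Qed.

Lemma total_over_gcdE : total_over_gcd p = \sum_i reduced i.
Proof.
rewrite /total_over_gcd -/pgcd (eq_bigr (fun i => reduced i * pgcd)) => [|i _].
  by rewrite -big_distrl mulnK // pgcd_gt0.
by rewrite reducedK.
Qed.

Lemma biggcd_reduced : \big[gcdn/0]_(i < n.+1) reduced i = 1.
Proof.
apply/eqP; rewrite -(eqn_pmul2l pgcd_gt0) muln1.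
rewrite (big_morph (muln pgcd) (muln_gcdr pgcd) (muln0 pgcd)) /=.
by apply/eqP/eq_bigr => i _; rewrite mulnC reducedK.
Qed.

End Reduced.

Section StationaryDivisor.
Variables (R : realType) (n : nat) (c : R) (p : 'I_n.+1 -> nat).
Hypothesis hpos : forall i, (0 < p i)%N.
Hypothesis hsorted : forall i j : 'I_n.+1, (i <= j)%N -> (p j <= p i)%N.
Hypotheses (hc0 : 0 <= c) (hc1 : c <= 1).

Local Notation G := (quot_ge c p).
Local Notation Z := (zero_denom c).
Implicit Types (a : 'I_n.+1 -> nat) (i j w : 'I_n.+1).

Definition is_winner (a : 'I_n.+1 -> nat) (i : 'I_n.+1) : bool :=
  [forall j : 'I_n.+1, G a i j] && [forall j : 'I_n.+1, (j < i)%N ==> ~~ G a j i].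

Lemma quot_ge_refl a : reflexive (G a).
Proof. by move=> i; rewrite /quot_ge; case: (Z a i). Qed.

Lemma quot_ge_total a : total (G a).
Proof.
move=> i j; rewrite /quot_ge.
by case: (Z a i); case: (Z a j) => //; [apply: leq_total | apply: le_total].
Qed.

Lemma quot_ge_trans a : transitive (G a).
Proof.
move=> j i k; rewrite /quot_ge.
case: (Z a i); case: (Z a j); case: (Z a k) => //.
  by move=> ji kj; apply: leq_trans kj ji.
by move=> ij jk; apply: le_trans jk ij.
Qed.

Lemma exists_quot_ge_max a : exists i, forall j, G a i j.
Proof.
have srt := sort_sorted (@quot_ge_total a) (enum 'I_n.+1).
have mem j : j \in sort (G a) (enum 'I_n.+1) by rewrite mem_sort mem_enum.
move: srt mem; case: (sort _ _) => [_ /(_ ord0) //|i s /= srt mem].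
exists i => j; have := mem j; rewrite inE => /predU1P [->|js].
  exact: quot_ge_refl.
by have /allP := order_path_min (@quot_ge_trans a) srt; apply.
Qed.

Lemma winnerP a : is_winner a (winner c p a).
Proof.
have [i0 max_i0] := exists_quot_ge_max a.
have Pi0 : [forall j, G a i0 j] by apply/forallP.
case: (arg_minnP (P := fun i => [forall j, G a i j]) val Pi0) => w wmax wmin.
rewrite /winner; case: pickP => [//|/(_ w) /negbT]; apply: contraNT => _.
apply/andP; split=> //; apply/forallP => j; apply/implyP => jw.
apply: contraL jw => Gjw; rewrite -leqNgt; apply: wmin; apply/forallP => k.
exact: quot_ge_trans Gjw (forallP wmax k).
Qed.

Lemma winner_unique a i : is_winner a i -> winner c p a = i.
Proof.
have /andP [/forallP wmax /forallP wmin] := winnerP a.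
case/andP => /forallP imax /forallP imin; apply: val_inj => /=.
case: (ltngtP (winner c p a) i) => // [wi|iw].
  by have := implyP (imin _) wi; rewrite wmax.
by have := implyP (wmin _) iw; rewrite imax.
Qed.

Lemma eq_winner a a' : a =1 a' -> winner c p a = winner c p a'.
Proof.
move=> eq_a; have eqG i j : G a i j = G a' i j.
  by rewrite /quot_ge /zero_denom !eq_a.
rewrite /winner; congr (odflt _ _); apply: eq_pick => i /=.
by congr andb; apply: eq_forallb => j; rewrite eqG.
Qed.

Lemma zero_denom_eq0 a i : Z a i -> (a i)%:R + c = 0.
Proof. by case/andP => /eqP -> /eqP ->; rewrite addr0. Qed.

Lemma denom_gt0 a i : ~~ Z a i -> 0 < (a i)%:R + c.
Proof.
rewrite /zero_denom negb_and => /orP [cn0|ai0].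
  by rewrite ltr_wpDl // lt_neqAle eq_sym cn0.
by rewrite ltr_wpDr // ltr0n lt0n.
Qed.

Lemma quot_ge_zero a i j : Z a i -> Z a j -> G a i j = (p j <= p i)%N.
Proof. by rewrite /quot_ge => -> ->. Qed.

Lemma quot_geE a i j : ~~ (Z a i && Z a j) ->
  G a i j = ((p j)%:R * ((a i)%:R + c) <= (p i)%:R * ((a j)%:R + c)).
Proof.
rewrite /quot_ge; case Zi: (Z a i); case Zj: (Z a j) => //= _.
- rewrite (zero_denom_eq0 Zi) mulr0; apply/esym/mulr_ge0 => //.
  by rewrite ltW // denom_gt0 ?Zj.
- rewrite (zero_denom_eq0 Zj) mulr0; apply/esym/negbTE; rewrite -ltNge.
  by rewrite mulr_gt0 ?ltr0n ?hpos // denom_gt0 ?Zi.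
- by rewrite ler_pdivrMr ?denom_gt0 ?Zj // mulrAC ler_pdivlMr ?denom_gt0 ?Zi.
Qed.

Lemma allocS k i :
  alloc c p k.+1 i = (alloc c p k i + (i == winner c p (alloc c p k)))%N.
Proof. by rewrite /=; case: eqP; rewrite ?addn1 ?addn0. Qed.

Lemma sum_alloc k : (\sum_i alloc c p k i)%N = k.
Proof.
elim: k => [|k IH]; first by rewrite big1.
rewrite (eq_bigr _ (fun i _ => allocS k i)) big_split /= IH.
rewrite (bigD1 (winner c p (alloc c p k))) //= eqxx big1 ?addn0 ?addn1 //.
by move=> j /negbTE ->.
Qed.

Section Proportional.
Variable b : 'I_n.+1 -> nat.
Hypothesis hb_gt0 : forall i, (0 < b i)%N.
Hypothesis hb_prop : forall i j, (p i * b j = p j * b i)%N.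

Lemma quot_ge_addl a i j :
  G (fun k => b k + a k)%N i j = (Z a i && Z a j) || G a i j.
Proof.
have nz_ba k : ~~ Z (fun k => b k + a k)%N k.
  by rewrite /zero_denom negb_and -lt0n addn_gt0 hb_gt0 orbT.
rewrite quot_geE /=; last by rewrite negb_and nz_ba.
rewrite !natrD -!addrA (mulrDr (p j)%:R) (mulrDr (p i)%:R) -!natrM (hb_prop i j).
rewrite lerD2l; case: (boolP (Z a i && Z a j)) => [/andP [Zi Zj]|nz] /=.
  by rewrite !zero_denom_eq0 // !mulr0 lexx.
by rewrite quot_geE.
Qed.

Lemma winner_addl a : winner c p (fun k => b k + a k)%N = winner c p a.
Proof.
apply: winner_unique; have /andP [/forallP wmax /forallP wmin] := winnerP a.
apply/andP; split; apply/forallP => j; first by rewrite quot_ge_addl wmax orbT.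
apply/implyP => jw; have not_Gjw := implyP (wmin j) jw.
rewrite quot_ge_addl negb_or not_Gjw andbT; apply: contra not_Gjw.
by case/andP => Zj Zw; rewrite quot_ge_zero // hsorted // ltnW.
Qed.

(* This is where [c <= 1] is needed: [p_w (1 - c) + p_j c > 0]. *)
Lemma quot_ge_full_lt a w j : a w = b w -> (a j < b j)%N -> ~~ G a w j.
Proof.
move=> aw aj; have Zw : ~~ Z a w by rewrite /zero_denom aw negb_and -lt0n hb_gt0 orbT.
rewrite quot_geE -?ltNge ?aw; last by rewrite negb_and Zw.
have ajb : (a j)%:R + 1 <= (b j)%:R :> R by rewrite natr1 ler_nat.
have cross : (p w)%:R * (b j)%:R = (p j)%:R * (b w)%:R :> R.
  by rewrite -!natrM hb_prop.
have pw_ajb : (p w)%:R * ((a j)%:R + 1) <= (p w)%:R * (b j)%:R :> R.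
  by rewrite ler_wpM2l.
have pw_ge : 1 - c <= (p w)%:R * (1 - c).
  by rewrite ler_peMl ?subr_ge0 // ler1n hpos.
have pj_ge : c <= (p j)%:R * c by rewrite ler_peMl // ler1n hpos.
lra.
Qed.

Lemma alloc_le_quota k : (k <= \sum_i b i)%N -> forall i, (alloc c p k i <= b i)%N.
Proof.
elim: k => [//|k IH] lt_k i; have {IH} le_b := IH (ltnW lt_k).
rewrite /=; case: eqP => [->|_] //; set w := winner c p _.
rewrite ltn_neqAle le_b andbT; apply/negP => /eqP aw.
have [j aj] : exists j, (alloc c p k j < b j)%N.
  apply/existsP; apply: contraLR lt_k => /existsPn below; rewrite -leqNgt.
  rewrite -[leqRHS](sum_alloc k); apply: leq_sum => i0 _.
  by rewrite leqNgt below.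
by have := quot_ge_full_lt aw aj; rewrite (forallP (andP (winnerP _)).1).
Qed.

Lemma alloc_quota i : alloc c p (\sum_i b i) i = b i.
Proof.
apply/eqP; rewrite eqn_leq alloc_le_quota //=.
have := sumnB (index_enum 'I_n.+1) (P := xpredT) (fun i _ => alloc_le_quota (leqnn _) i).
rewrite sum_alloc subnn => /eqP; rewrite sum_nat_eq0 => /forallP /(_ i).
by rewrite subn_eq0.
Qed.

Lemma alloc_addl N : alloc c p N =1 b ->
  forall k i, alloc c p (N + k) i = (b i + alloc c p k i)%N.
Proof.
move=> allocN; elim=> [|k IH] i; first by rewrite addn0 allocN addn0.
by rewrite addnS !allocS (eq_winner IH) winner_addl IH addnA.
Qed.

Lemma stat_seq_addl N k : alloc c p N =1 b -> (1 <= k)%N ->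
  stat_seq c p (N + k) = stat_seq c p k.
Proof.
move=> allocN; case: k => [//|k] _; rewrite /stat_seq addnS /=.
by rewrite (eq_winner (alloc_addl allocN k)) winner_addl.
Qed.

End Proportional.

Section Period.
Variable r : nat.
Hypothesis r_period :
  forall k, (1 <= k)%N -> stat_seq c p (r + k) = stat_seq c p k.

Lemma alloc_add_period k i :
  alloc c p (r + k) i = (alloc c p r i + alloc c p k i)%N.
Proof.
elim: k i => [|k IH] i; first by rewrite /= !addn0.
have win : winner c p (alloc c p (r + k)) = winner c p (alloc c p k).
  by have := r_period (ltn0Sn k); rewrite /stat_seq addnS.
by rewrite addnS !allocS IH win addnA.
Qed.

Lemma alloc_mul_period N i : alloc c p (N * r) i = (N * alloc c p r i)%N.
Proof. by elim: N i => [//|N IH] i; rewrite mulSn alloc_add_period IH mulSn. Qed.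

Lemma sum_reduced_dvdn_period : (1 <= r)%N -> (\sum_i reduced p i %| r)%N.
Proof.
move=> r_gt0; set P := (\sum_i reduced p i)%N.
have r_red_gt0 i : (0 < r * reduced p i)%N by rewrite muln_gt0 r_gt0 reduced_gt0.
have dvd_r_red i : (P %| r * reduced p i)%N.
  rewrite -(alloc_quota r_red_gt0 (scaled_reduced_prop p r)) -big_distrr /= mulnC.
  by rewrite alloc_mul_period dvdn_mulr.
rewrite -[r]muln1 -(biggcd_reduced hpos).
rewrite (big_morph (muln r) (muln_gcdr r) (muln0 r)).
by apply/dvdn_biggcdP => i _.
Qed.

End Period.

Lemma stat_seq_periodic m k : (1 <= m)%N -> (1 <= k)%N ->
  stat_seq c p (m * \sum_i reduced p i + k) = stat_seq c p k.
Proof.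
move=> m_gt0; set b := fun i => (m * reduced p i)%N.
have b_gt0 i : (0 < b i)%N by rewrite muln_gt0 m_gt0 reduced_gt0.
apply: (stat_seq_addl b_gt0 (scaled_reduced_prop p m)) => i.
by rewrite big_distrr (alloc_quota b_gt0 (scaled_reduced_prop p m)).
Qed.

End StationaryDivisor.

Theorem mainTheorem4 (R : realType) (n : nat) (p : 'I_n.+1 -> nat) (c : R)
  (hpos : forall i, (0 < p i)%N)
  (hsorted : forall i j : 'I_n.+1, (i <= j)%N -> (p j <= p i)%N)
  (hc : 0 <= c <= 1) :
  let P := total_over_gcd p in
  (forall m k : nat, (1 <= m)%N -> (1 <= k)%N ->
     stat_seq c p (m * P + k) = stat_seq c p k)
  /\
  (forall q : nat, (1 <= q)%N ->
     (forall k : nat, (1 <= k)%N -> stat_seq c p (q + k) = stat_seq c p k) ->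
     (P <= q)%N).
Proof.
case/andP: hc => hc0 hc1 P; rewrite /P total_over_gcdE //; split.
  exact: stat_seq_periodic.
move=> q q_gt0 q_period.
exact: dvdn_leq q_gt0 (sum_reduced_dvdn_period hpos hc0 hc1 q_period q_gt0).
Qed.
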